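(* Let $G_{\mathrm{AndII}}$ be the $q$-grammar with master variables $\{x,y\}$, rule $x_j\mapsto q^jx_jy_{j+1}$, $y_j\mapsto q^{j+1}x_{j+1}$ ($j\ge0$), and order AIO, and let $D$ be its $q$-derivative. Let $\phi$ be the evaluation $\phi(x_j)=x$, $\phi(y_j)=y$ for all $j$ (commuting indeterminates). Then for all $n\ge0$, \[ \phi\big(D^n(x_0)\big)=E^{II}_{n+1}(q;x,y),\qquad\text{where } E^{II}_m(q;x,y)=\sum_{T\in\mathcal{T}^{II}_m}x^{l(T)}y^{u(T)}q^{\operatorname{inv}(T)}. \]
   Context: $\mathbb{K}$ is a commutative ring with unity and characteristic zero, $q$ an indeterminate. For a set $S$ of master variables, $\mathbb{S}=\{s_i:s\in S,\ i\ge0\}$ is a set of non-commuting variables, $F(\mathbb{S})$ the free group on $\mathbb{S}$, $\mathbb{E}=\mathbb{K}[q][F(\mathbb{S})]$ its group algebra. A rule $R$ assigns to each $s_i$ an element of $\mathbb{E}$, extended by $R(s_i^{-1})=-s_i^{-1}R(s_i)s_{i+1}^{-1}$. The up-arrow $\uparrow$ is the linear map replacing each letter $s_i^{\pm1}$ by $s_{i+1}^{\pm1}$. AIO stably reorders the letters of a word according to the position of their underlying variable in $x_0,y_0,x_1,y_1,\dots$. The $q$-derivative of a $q$-grammar $(S,R,\rho)$ is the $\mathbb{K}[q]$-linear map with $D(w_1\cdots w_n)=\sum_{j=1}^n\rho\big(w_1\cdots w_{j-1}R(w_j)\uparrow(w_{j+1}\cdots w_n)\big)$, $D^0=\mathrm{id}$,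 $D^k=D\circ D^{k-1}$; an evaluation extends to a $\mathbb{K}[q]$-linear ring morphism. An increasing binary tree on $[m]$ is a rooted tree on $\{1,\dots,m\}$ with labels increasing along paths from the root, each vertex having at most one (distinguished) left child and at most one right child. $\mathcal{T}^{II}_m$ is the set of André II trees on $[m]$: increasing binary trees in which, for every vertex with at least one child, the minimum label of the left subtree is greater than the minimum label of the right subtree (minimum of the empty tree $=+\infty$). $l(T)$ is the number of leaves, $u(T)$ the number of vertices with exactly one child. An inversion of $T$ is a pair $(i,j)$ of vertices with $i>j$ such that either (1) $j$ belongs to the right subtree of some vertex $v$ on the path from the root to $i$ whose left child is on that path; or (2) $j$ is on the path from the root to $i$ and the left child of $j$ is on that path; $\operatorname{inv}(T)$ counts inversions. *)

From HB Require Import structures.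
From mathcomp Require Import all_boot all_order all_algebra.
From mathcomp Require Import freeg mpoly.
Set Implicit Arguments. Unset Strict Implicit. Unset Printing Implicit Defensive.
Import Order.TTheory GRing.Theory.
Local Open Scope ring_scope.

(* A letter s_i of the master variable s : (false = x, true = y). *)
Definition letter := (bool * nat)%type.
Definition word := seq letter.

(* Linear combinations of words with coefficients in K[q] = {poly K}. *)
Definition E (K : comNzRingType) := {freeg word / {poly K}}.

Definition upw (w : word) : word := [seq (a.1, a.2.+1) | a <- w].

(* position of the underlying variable in x_0, y_0, x_1, y_1, ... *)
Definition aio_key (a : letter) : nat := (2 * a.2 + a.1)%N.

(* AIO: stable reordering of the letters (mathcomp's sort is stable) *)
Definition aio (w : word) : word := sort (fun a b => aio_key a <= aio_key b)%N w.

Section QDeriv.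
Variable K : comNzRingType.

Definition rho_lin (rho : word -> word) (F : E K) : E K :=
  fglift (fun w => << rho w >> : E K) F.

Definition mulW (u v : word) (F : E K) : E K :=
  fglift (fun w => << u ++ w ++ v >> : E K) F.

Definition qderiv_word (R : letter -> E K) (rho : word -> word) (w : word) : E K :=
  \sum_(j < size w)
    rho_lin rho (mulW (take j w) (upw (drop j.+1 w)) (R (nth (false, 0%N) w j))).

Definition qderiv (R : letter -> E K) (rho : word -> word) (F : E K) : E K :=
  fglift (qderiv_word R rho) F.

Definition rule_AndII (a : letter) : E K :=
  match a with
  | (false, j) => Freeg [:: (('X^j : {poly K}), [:: (false, j); (true, j.+1)])]
  | (true, j) => Freeg [:: (('X^(j.+1) : {poly K}), [:: (false, j.+1)])]
  end.

Definition D_AndII : E K -> E K := qderiv rule_AndII aio.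

Definition qvar : {mpoly K[3]} := 'X_(inord 0).
Definition xvar : {mpoly K[3]} := 'X_(inord 1).
Definition yvar : {mpoly K[3]} := 'X_(inord 2).

Definition embq (c : {poly K}) : {mpoly K[3]} :=
  \sum_(i < size c) c`_i *: qvar ^+ i.

Definition phi_letter (a : letter) : {mpoly K[3]} := if a.1 then yvar else xvar.

Definition phi_word (w : word) : {mpoly K[3]} := \prod_(a <- w) phi_letter a.

Definition phi (F : E K) : {mpoly K[3]} :=
  \sum_(w <- dom F) embq (coeff w F) * phi_word w.

End QDeriv.

Inductive btree := BLeaf | BNode of nat & btree & btree.

Fixpoint btree_eqb (s t : btree) : bool :=
  match s, t with
  | BLeaf, BLeaf => true
  | BNode a l r, BNode b l' r' => (a == b) && btree_eqb l l' && btree_eqb r r'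
  | _, _ => false
  end.

Lemma btree_eqP : Equality.axiom btree_eqb.
Proof.
elim=> [|a l IHl r IHr] [|b l' r'] /=; try by constructor.
case: eqP => [->|ne]; last by constructor; case.
case: IHl => [->|ne]; last by constructor; case.
case: IHr => [->|ne]; last by constructor; case.
by constructor.
Qed.

HB.instance Definition _ := hasDecEq.Build btree btree_eqP.

Fixpoint labels (t : btree) : seq nat :=
  match t with BLeaf => [::] | BNode v l r => v :: labels l ++ labels r end.

Fixpoint increasing (t : btree) : bool :=
  match t with
  | BLeaf => true
  | BNode v l r =>
      all (fun u => v < u)%N (labels l ++ labels r) && increasing l && increasing r
  end.

Definition increasing_on (m : nat) (t : btree) : bool :=
  increasing t && perm_eq (labels t) (iota 1 m).

(* minimum label, None standing for +infinity (empty tree) *)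
Definition tmin (t : btree) : option nat :=
  if labels t is a :: s then Some (foldr minn a s) else None.

Definition gt_ext (a b : option nat) : bool :=
  match a, b with
  | None, None => false
  | None, Some _ => true
  | Some _, None => false
  | Some a, Some b => (b < a)%N
  end.

Fixpoint andre_cond (t : btree) : bool :=
  match t with
  | BLeaf => true
  | BNode _ l r =>
      (((l != BLeaf) || (r != BLeaf)) ==> gt_ext (tmin l) (tmin r))
      && andre_cond l && andre_cond r
  end.

Definition andreII (m : nat) (t : btree) : bool :=
  increasing_on m t && andre_cond t.

Fixpoint nleaves (t : btree) : nat :=
  match t with
  | BLeaf => 0
  | BNode _ l r => ((l == BLeaf) && (r == BLeaf)) + nleaves l + nleaves r
  end.

Fixpoint nunary (t : btree) : nat :=
  match t with
  | BLeaf => 0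
  | BNode _ l r => ((l == BLeaf) (+) (r == BLeaf)) + nunary l + nunary r
  end.

(* positions: sequences of directions (false = left, true = right) *)
Fixpoint path_to (t : btree) (i : nat) : option (seq bool) :=
  match t with
  | BLeaf => None
  | BNode v l r =>
      if v == i then Some [::] else
      match path_to l i with
      | Some p => Some (false :: p)
      | None => omap (cons true) (path_to r i)
      end
  end.

Fixpoint subtree_at (t : btree) (p : seq bool) : btree :=
  match p, t with
  | [::], _ => t
  | b :: p', BNode _ l r => subtree_at (if b then r else l) p'
  | _ :: _, BLeaf => BLeaf
  end.

Definition root_label (t : btree) : option nat :=
  if t is BNode v _ _ then Some v else None.

(* (i, j) is an inversion of t: i > j and, writing p for the path from the
   root to i, for some vertex v = subtree_at t (take k p) on that path whose
   left child is on the path (i.e. the k-th step of p goes left), either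
   (1) j lies in the right subtree of v, or (2) j = v. *)
Definition is_inv (t : btree) (i j : nat) : bool :=
  (j < i)%N &&
  match path_to t i with
  | None => false
  | Some p =>
      has (fun k => (nth true p k == false) &&
             ((j \in labels (subtree_at t (rcons (take k p) true)))
              || (root_label (subtree_at t (take k p)) == Some j)))
          (iota 0 (size p))
  end.

Definition inv (t : btree) : nat :=
  (\sum_(i <- labels t) \sum_(j <- labels t) is_inv t i j)%N.

Definition weightII (K : comNzRingType) (t : btree) : {mpoly K[3]} :=
  xvar K ^+ nleaves t * yvar K ^+ nunary t * qvar K ^+ inv t.

Definition enumerates (P : pred btree) (s : seq btree) : Prop :=
  uniq s /\ forall t, (t \in s) = P t.

From Pilot Require Import Defs.
From HB Require Import structures.
From mathcomp Require Import all_boot all_order all_algebra.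
From mathcomp Require Import freeg mpoly.
From mathcomp Require Import zify ring.
Set Implicit Arguments. Unset Strict Implicit. Unset Printing Implicit Defensive.

(* Rank the vertices of a binary tree in the order right subtree, root, left
   subtree, and record every vertex without left child by a letter
   ([tree_word]).  Grafting a new maximal label at the vertex of the j-th letter
   replaces that letter by its image under the rule of G_AndII and shifts the
   later letters up, exactly as the q-derivative does; the graft preserves the
   André II property, adds as many inversions as the exponent of q in the rule,
   and is undone by removing the maximal leaf.  Hence D^n(x_0) is the sum of
   q^inv(T) w(T) over the André II trees T on [n+1].  Each w(T) is already
   AIO-sorted and, as the André condition forbids a vertex with only a left
   child, has one x per leaf and one y per vertex with one child; so phi maps
   the term of T to its weight. *)

Definition shift (k : nat) (w : word) : word := [seq (a.1, a.2 + k) | a <- w].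

Lemma shift_shift k k' w : shift k (shift k' w) = shift (k' + k) w.
Proof. by rewrite /shift -map_comp; apply: eq_map => a; rewrite /= addnA. Qed.

Lemma upw_shift1 w : upw w = shift 1 w.
Proof. by apply: eq_map => a; rewrite addn1. Qed.

Definition rule_word (a : letter) : word :=
  if a.1 then [:: (false, a.2.+1)] else [:: (false, a.2); (true, a.2.+1)].

Definition rule_deg (a : letter) : nat := if a.1 then a.2.+1 else a.2.

Lemma rule_word_shift k a : rule_word (a.1, a.2 + k) = shift k (rule_word a).
Proof. by case: a => [[] i]; rewrite /rule_word /shift /= ?addSn. Qed.

Lemma rule_deg_shift k a : rule_deg (a.1, a.2 + k) = rule_deg a + k.
Proof. by case: a => [[] i]; rewrite /rule_deg /= ?addSn. Qed.

Definition derive_at (w : word) (j : nat) : word :=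
  take j w ++ rule_word (nth (false, 0) w j) ++ upw (drop j.+1 w).

Lemma derive_at_catl w w' j : j < size w -> derive_at (w ++ w') j = derive_at w j ++ upw w'.
Proof.
move=> jw; rewrite /derive_at take_cat nth_cat jw drop_cat /upw -!catA.
have [_|wj] := ltnP j.+1 (size w); first by rewrite map_cat.
have -> : j.+1 = size w by apply/eqP; rewrite eqn_leq jw.
by rewrite subnn drop0 drop_size.
Qed.

Lemma derive_at_catr w w' j : derive_at (w ++ w') (size w + j) = w ++ derive_at w' j.
Proof.
rewrite /derive_at take_cat nth_cat drop_cat !ltnNge -addnS !leq_addr /=.
by rewrite !addKn -catA.
Qed.

Lemma derive_at_shift k w j : j < size w -> derive_at (shift k w) j = shift k (derive_at w j).
Proof.
move=> jw; rewrite /derive_at (nth_map (false, 0)) // rule_word_shift.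
by rewrite /shift !map_cat map_take -map_drop -!/(shift _ _) !upw_shift1 !shift_shift addnC.
Qed.

Lemma notin_below m (s : seq nat) : all (fun u => u < m) s -> m \notin s.
Proof. by move=> sm; apply/negP => /(allP sm); rewrite ltnn. Qed.

Lemma all_ltn_notin m (s : seq nat) :
  all (fun u => u <= m) s -> m \notin s -> all (fun u => u < m) s.
Proof.
move=> sm ms; apply/allP => u us; rewrite ltn_neqAle (allP sm u us) andbT.
by apply: contraNneq ms => <-.
Qed.

(** * Grafting a new maximal label *)

Definition single (m : nat) : btree := BNode m BLeaf BLeaf.

(* A vertex of rank i without left child gives x_i if it is a leaf, y_i if it
   has a right child. *)
Fixpoint tree_word (t : btree) : word :=
  match t with
  | BLeaf => [::]
  | BNode _ l r =>
      tree_word r ++ (if l is BLeaf then [:: (r != BLeaf, size (labels r))] else [::])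
      ++ shift (size (labels r)).+1 (tree_word l)
  end.

(* Grafts m at the vertex of the j-th letter of [tree_word t]: as right child
   of a leaf, as left child of a vertex with only a right child. *)
Fixpoint insert (t : btree) (j m : nat) : btree :=
  match t with
  | BLeaf => BLeaf
  | BNode v l r =>
      if j < size (tree_word r) then BNode v l (insert r j m) else
      match l, r with
      | BLeaf, BLeaf => BNode v BLeaf (single m)
      | BLeaf, _ => BNode v (single m) r
      | _, _ => BNode v (insert l (j - size (tree_word r)) m) r
      end
  end.

Lemma tree_word_unary v r :
  tree_word (BNode v BLeaf r) = tree_word r ++ [:: (r != BLeaf, size (labels r))].
Proof. by []. Qed.

Lemma tree_word_binary v l r : l != BLeaf ->
  tree_word (BNode v l r) = tree_word r ++ shift (size (labels r)).+1 (tree_word l).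
Proof. by case: l. Qed.

Lemma insert_right v l r j m : j < size (tree_word r) ->
  insert (BNode v l r) j m = BNode v l (insert r j m).
Proof. by move=> /= ->. Qed.

Lemma insert_single v m : insert (single v) 0 m = BNode v BLeaf (single m).
Proof. by []. Qed.

Lemma insert_unary v r m : r != BLeaf ->
  insert (BNode v BLeaf r) (size (tree_word r)) m = BNode v (single m) r.
Proof. by case: r => //= *; rewrite ltnn. Qed.

Lemma insert_binary v l r j m : l != BLeaf ->
  insert (BNode v l r) (size (tree_word r) + j) m = BNode v (insert l j m) r.
Proof. by case: l => //= *; rewrite ltnNge leq_addr addKn; case: r. Qed.

Arguments tree_word : simpl never.
Arguments insert : simpl never.

Lemma size_tree_word v l r : size (tree_word (BNode v l r)) =
  size (tree_word r) + (l == BLeaf) + size (tree_word l).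
Proof.
have [->|lN] := eqVneq l BLeaf; first by rewrite tree_word_unary size_cat addn0.
by rewrite tree_word_binary // size_cat size_map addn0.
Qed.

Variant insert_spec (v m : nat) : btree -> btree -> nat -> btree -> Type :=
  | InsertRight l r j of j < size (tree_word r) :
      insert_spec v m l r j (BNode v l (insert r j m))
  | InsertSingle : insert_spec v m BLeaf BLeaf 0 (BNode v BLeaf (single m))
  | InsertUnary r of r != BLeaf :
      insert_spec v m BLeaf r (size (tree_word r)) (BNode v (single m) r)
  | InsertBinary l r j of l != BLeaf & j < size (tree_word l) :
      insert_spec v m l r (size (tree_word r) + j) (BNode v (insert l j m) r).

Lemma insertP v l r j m : j < size (tree_word (BNode v l r)) ->
  insert_spec v m l r j (insert (BNode v l r) j m).
Proof.
rewrite size_tree_word; have [jr _|rj] := ltnP j (size (tree_word r)).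
  by rewrite insert_right //; exact: InsertRight.
rewrite -(subnKC rj) -addnA ltn_add2l; move: (j - _) => k.
have [->|lN] := eqVneq l BLeaf; last first.
  by move=> kl; rewrite insert_binary //; exact: InsertBinary.
rewrite add1n ltnS leqn0 => /eqP ->; rewrite addn0.
have [->|rN] := eqVneq r BLeaf; first exact: InsertSingle.
by rewrite insert_unary //; exact: InsertUnary.
Qed.

Lemma tree_word_neq0 t j : j < size (tree_word t) -> t != BLeaf.
Proof. by case: t. Qed.

Lemma insert_neq0 t j m : j < size (tree_word t) -> insert t j m != BLeaf.
Proof. by case: t => // v l r /(insertP m) []. Qed.

Lemma labels_insert t j m : j < size (tree_word t) ->
  perm_eq (labels (insert t j m)) (m :: labels t).
Proof.
elim: t j => [|v l IHl r IHr] j // jt; move: IHl IHr.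
case: (insertP m jt) => {l r j jt} /=
  [l r j jr _ /(_ j jr) IH|_ _|r _ _ _|l r j _ jl /(_ j jl) IH _].
- by rewrite perm_sym -(perm_catCA (v :: _) [:: m]) /= perm_cons perm_cat2l perm_sym.
- by rewrite perm_sym -(perm_catCA [:: v] [:: m]).
- by rewrite perm_sym -(perm_catCA [:: v] [:: m]).
- by rewrite perm_sym -(perm_catCA [:: v] [:: m]) /= perm_cons -cat_cons perm_cat2r perm_sym.
Qed.

Lemma size_labels_insert t j m : j < size (tree_word t) ->
  size (labels (insert t j m)) = (size (labels t)).+1.
Proof. by move/(labels_insert m)/perm_size. Qed.

Lemma tree_word_insert t j m : j < size (tree_word t) ->
  tree_word (insert t j m) = derive_at (tree_word t) j.
Proof.
elim: t j => [|v l IHl r IHr] j // jt; move: IHl IHr.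
case: (insertP m jt) => {l r j jt}
  [l r j jr _ /(_ j jr) IH|_ _|r rN _ _|l r j lN jl /(_ j jl) IH _].
- have [->|lN] := eqVneq l BLeaf; rewrite ?tree_word_unary ?tree_word_binary // IH.
    by rewrite derive_at_catl // (insert_neq0 m jr) (tree_word_neq0 jr) size_labels_insert.
  by rewrite derive_at_catl // upw_shift1 shift_shift size_labels_insert // addn1.
- by rewrite !tree_word_unary.
- by rewrite tree_word_binary // tree_word_unary -[size (tree_word r)]addn0 derive_at_catr rN.
- by rewrite !tree_word_binary ?insert_neq0 // IH derive_at_catr derive_at_shift.
Qed.

(** * Inversions *)

Lemma path_to_eqNone t i : (path_to t i == None) = (i \notin labels t).
Proof.
elim: t => [|v l IHl r IHr] //=; rewrite in_cons mem_cat (eq_sym i v).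
case: (v == i) => //=; case: (path_to l i) IHl => [p|] /=; first by case: (i \in _).
by case: (i \in _) => //= _; rewrite -IHr; case: (path_to r i).
Qed.

Lemma path_to_mem t i : i \in labels t -> exists p, path_to t i = Some p.
Proof.
by rewrite -[_ \in _]negbK -path_to_eqNone; case: (path_to t i) => // p; exists p.
Qed.

Lemma has_iota1 (P : pred nat) n : has P (iota 1 n) = has (P \o succn) (iota 0 n).
Proof. by rewrite -[1]/(1 + 0) iotaDl has_map. Qed.

Lemma is_inv_root v l r j : is_inv (BNode v l r) v j = false.
Proof. by rewrite /is_inv /= eqxx andbF. Qed.

Lemma is_inv_left v l r i j : i \in labels l -> v != i ->
  is_inv (BNode v l r) i j = ((j < i) && (j \in v :: labels r)) || is_inv l i j.
Proof.
move=> il vi; have [p lp] := path_to_mem il.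
rewrite /is_inv /= (negbTE vi) lp /= has_iota1 in_cons.
have -> : subtree_at r [::] = r by case: r.
by case: (j < i); rewrite //= (inj_eq Some_inj) eq_sym [(_ \in _) || _]orbC.
Qed.

Lemma is_inv_right v l r i j : i \in labels r -> i \notin labels l -> v != i ->
  is_inv (BNode v l r) i j = is_inv r i j.
Proof.
move=> ir il vi; have [p rp] := path_to_mem ir; move: il; rewrite -path_to_eqNone.
by move/eqP=> lN; rewrite /is_inv /= (negbTE vi) lN rp /= has_iota1.
Qed.

Lemma mem_subtree_at t p : {subset labels (subtree_at t p) <= labels t}.
Proof.
elim: p t => [|b p IH] [|v l r] //= x /IH.
by case: b; rewrite in_cons mem_cat => ->; rewrite ?orbT.
Qed.

Lemma is_inv_mem t i j : is_inv t i j -> j \in labels t.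
Proof.
rewrite /is_inv => /andP[_]; case: (path_to t i) => // p /hasP[k _ /andP[_ /orP[]]].
  exact: mem_subtree_at.
case E: (subtree_at t _) => [|u ? ?] //= /eqP[<-].
by apply: (mem_subtree_at (p := take k p)); rewrite E in_cons eqxx.
Qed.

Lemma uniq_labels_sub v l r : uniq (labels (BNode v l r)) -> uniq (labels l) /\ uniq (labels r).
Proof. by rewrite /= cat_uniq => /andP[_ /and3P[]]. Qed.

Lemma all_labels_node (P : pred nat) v l r :
  all P (labels (BNode v l r)) = [&& P v, all P (labels l) & all P (labels r)].
Proof. by rewrite /= all_cat. Qed.

Lemma labels_node_perm v l r : perm_eq (labels (BNode v l r)) (labels l ++ v :: labels r).
Proof. by rewrite /= (perm_catCA [:: v] (labels l)). Qed.

Lemma labels_node_disjoint v l r j : uniq (labels (BNode v l r)) ->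
  j \in labels l -> j \in v :: labels r -> False.
Proof.
rewrite (perm_uniq (labels_node_perm v l r)) cat_uniq => /and3P[_ /hasPn lvr _] jl.
by move=> /lvr; rewrite jl.
Qed.

Lemma sum_is_inv_left v l r i : uniq (labels (BNode v l r)) -> i \in labels l ->
  \sum_(j <- labels (BNode v l r)) is_inv (BNode v l r) i j =
  \sum_(j <- labels l) is_inv l i j + \sum_(j <- v :: labels r) (j < i).
Proof.
move=> ut il; have disj := labels_node_disjoint ut.
have vi : v != i by apply/eqP => vi; apply: (disj i il); rewrite vi mem_head.
rewrite (perm_big _ (labels_node_perm v l r)) big_cat /=.
congr (_ + _); apply: eq_big_seq => j jA; rewrite is_inv_left //.
  have /negbTE-> : j \notin v :: labels r by apply/negP; apply: disj.
  by rewrite andbF.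
have /negbTE-> : ~~ is_inv l i j by apply/negP => /is_inv_mem /disj; apply.
by rewrite jA andbT orbF.
Qed.

Lemma sum_is_inv_sub t i s : uniq s -> uniq (labels t) -> {subset labels t <= s} ->
  \sum_(j <- s) is_inv t i j = \sum_(j <- labels t) is_inv t i j.
Proof.
move=> us ut ts; rewrite (bigID (mem (labels t))) /= [X in _ + X]big1 ?addn0.
  rewrite -big_filter; apply/perm_big/uniq_perm; rewrite ?filter_uniq // => j.
  by rewrite mem_filter andb_idr //; apply: ts.
by move=> j /negP jt; apply/eqP; rewrite eqb0; apply: contra_notN jt; apply: is_inv_mem.
Qed.

Lemma sum_is_inv_right v l r i : uniq (labels (BNode v l r)) -> i \in labels r ->
  \sum_(j <- labels (BNode v l r)) is_inv (BNode v l r) i j = \sum_(j <- labels r) is_inv r i j.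
Proof.
move=> ut ir; have disj := labels_node_disjoint ut.
have il : i \notin labels l.
  by apply/negP => /disj; apply; rewrite in_cons ir orbT.
have vi : v != i by apply: contraTneq ut => ->; rewrite /= mem_cat ir orbT.
rewrite (eq_bigr (fun j => is_inv r i j : nat)) => [|j _]; last by rewrite is_inv_right.
apply: sum_is_inv_sub => // [|j jr]; first by have [] := uniq_labels_sub ut.
by rewrite /= in_cons mem_cat jr !orbT.
Qed.

Definition inv_between (A B : seq nat) : nat := \sum_(a <- A) \sum_(b <- B) (b < a).

Lemma inv_node v l r : uniq (labels (BNode v l r)) ->
  Defs.inv (BNode v l r) = Defs.inv l + Defs.inv r + inv_between (labels l) (v :: labels r).
Proof.
move=> ut; rewrite {1}/Defs.inv {1}[labels _]/= big_cons big1 ?add0n => [|j _]; last first.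
  by rewrite is_inv_root.
rewrite big_cat (eq_big_seq _ (fun i => sum_is_inv_left ut)).
by rewrite (eq_big_seq _ (fun i => sum_is_inv_right ut)) big_split addnAC.
Qed.

Lemma inv_between_perml A A' B : perm_eq A A' -> inv_between A B = inv_between A' B.
Proof. exact: perm_big. Qed.

Lemma inv_between_permr A B B' : perm_eq B B' -> inv_between A B = inv_between A B'.
Proof. by move=> BB'; apply: eq_bigr => a _; apply: perm_big. Qed.

Lemma inv_between_cons_maxr m A B : all (fun a => a < m) A ->
  inv_between A (m :: B) = inv_between A B.
Proof.
move=> Am; rewrite /inv_between big_seq [RHS]big_seq; apply: eq_bigr => a /(allP Am) am.
by rewrite big_cons ltnNge ltnW.
Qed.

Lemma inv_between_cons_maxl m A B : all (fun b => b < m) B ->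
  inv_between (m :: A) B = size B + inv_between A B.
Proof.
move=> Bm; rewrite /inv_between big_cons -sum1_size big_seq [in RHS]big_seq.
by congr (_ + _); apply: eq_bigr => b /(allP Bm) ->.
Qed.

Lemma uniq_insert t j m : j < size (tree_word t) -> all (fun u => u < m) (labels t) ->
  uniq (labels (insert t j m)) = uniq (labels t).
Proof.
by move=> jt tm; rewrite (perm_uniq (labels_insert m jt)) /= notin_below.
Qed.

Lemma nth_tree_word_right v l r j : j < size (tree_word r) ->
  nth (false, 0) (tree_word (BNode v l r)) j = nth (false, 0) (tree_word r) j.
Proof.
have [->|lN] := eqVneq l BLeaf; rewrite ?tree_word_unary ?tree_word_binary //;
  by rewrite nth_cat => ->.
Qed.

Lemma nth_tree_word_left v l r j : l != BLeaf -> j < size (tree_word l) ->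
  rule_deg (nth (false, 0) (tree_word (BNode v l r)) (size (tree_word r) + j)) =
  rule_deg (nth (false, 0) (tree_word l) j) + (size (labels r)).+1.
Proof.
move=> lN jl; rewrite tree_word_binary // nth_cat ltnNge leq_addr addKn /=.
by rewrite (nth_map (false, 0)) // rule_deg_shift.
Qed.

Lemma inv_leaf : Defs.inv BLeaf = 0.
Proof. exact: big_nil. Qed.

Lemma inv_between_nil B : inv_between [::] B = 0.
Proof. exact: big_nil. Qed.

Lemma inv_insert t j m : j < size (tree_word t) ->
  uniq (labels t) -> all (fun u => u < m) (labels t) ->
  Defs.inv (insert t j m) = Defs.inv t + rule_deg (nth (false, 0) (tree_word t) j).
Proof.
elim: t j => [|v l IHl r IHr] j // jt ut tm; have ut' := ut; rewrite -(uniq_insert jt tm) in ut'.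
move: IHl IHr ut ut' tm; case: (insertP m jt) => {l r j jt}.
- move=> l r j jr _ IHr ut ut'; rewrite all_labels_node => /and3P[vm lm rm].
  have [_ ur] := uniq_labels_sub ut.
  have vir : perm_eq (v :: labels (insert r j m)) (m :: v :: labels r).
    by rewrite perm_sym -(perm_catCA [:: v] [:: m]) /= perm_cons perm_sym labels_insert.
  rewrite !inv_node // IHr // nth_tree_word_right //.
  rewrite (inv_between_permr _ vir) inv_between_cons_maxr //.
  lia.
- by move=> _ _ ut ut' _; rewrite !inv_node // !inv_leaf !inv_between_nil tree_word_unary.
- move=> r rN _ IHr ut ut'; rewrite all_labels_node => /and3P[vm _ rm].
  have vrm : all (fun u => u < m) (v :: labels r) by rewrite /= vm.
  rewrite !inv_node // !inv_leaf inv_between_cons_maxl // !inv_between_nil tree_word_unary.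
  rewrite nth_cat ltnn subnn rN /rule_deg /=; lia.
- move=> l r j lN jl IHl _ ut ut'; rewrite all_labels_node => /and3P[vm lm rm].
  have [ul _] := uniq_labels_sub ut.
  have vrm : all (fun u => u < m) (v :: labels r) by rewrite /= vm.
  rewrite !inv_node // IHl // nth_tree_word_left // (inv_between_perml _ (labels_insert m jl)).
  rewrite inv_between_cons_maxl //=; lia.
Qed.

Lemma increasing_insert t j m : j < size (tree_word t) -> all (fun u => u < m) (labels t) ->
  increasing (insert t j m) = increasing t.
Proof.
elim: t j => [|v l IHl r IHr] j // jt; move: IHl IHr.
case: (insertP m jt) => {l r j jt} [l r j jr _ IHr|_ _|r _ _ _|l r j _ jl IHl _];
  rewrite all_labels_node => /and3P[vm lm rm] /=.
- by rewrite IHr // !all_cat (perm_all _ (labels_insert m jr)) /= vm.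
- by rewrite vm.
- by rewrite vm.
- by rewrite IHl // !all_cat (perm_all _ (labels_insert m jl)) /= vm.
Qed.

Lemma tmin_increasing t : increasing t -> tmin t = root_label t.
Proof.
case: t => // v l r /andP[/andP[vlr _] _]; rewrite /tmin /=; congr Some.
by elim: (labels l ++ labels r) vlr => //= u s IH /andP[vu /IH ->]; apply/minn_idPr/ltnW.
Qed.

Lemma root_label_insert t j m : j < size (tree_word t) -> root_label (insert t j m) = root_label t.
Proof. by case: t => // v l r /(insertP m) []. Qed.

Lemma increasing_node v l r : increasing (BNode v l r) -> increasing l /\ increasing r.
Proof. by case/andP=> /andP[]. Qed.

Lemma andre_cond_insert t j m : j < size (tree_word t) -> all (fun u => u < m) (labels t) ->
  increasing t -> andre_cond (insert t j m) = andre_cond t.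
Proof.
elim: t j => [|v l IHl r IHr] j // jt; move: IHl IHr.
case: (insertP m jt) => {l r j jt} [l r j jr _ IHr|_ _|r rN _ _|l r j lN jl IHl _];
  rewrite all_labels_node => /and3P[vm lm rm] /increasing_node[il ir] /=.
- have ir' : increasing (insert r j m) by rewrite increasing_insert.
  rewrite IHr // (insert_neq0 m jr) (tree_word_neq0 jr) !orbT.
  by rewrite (tmin_increasing ir) (tmin_increasing ir') root_label_insert.
- by [].
- by rewrite (tmin_increasing ir); case: r rN rm {ir} => //= u ? ? _ /andP[->].
- have il' : increasing (insert l j m) by rewrite increasing_insert.
  rewrite IHl // (insert_neq0 m jl) lN.
  by rewrite (tmin_increasing il) (tmin_increasing il') root_label_insert.
Qed.

(** * Removing the maximal leaf *)

Fixpoint remove_leaf (m : nat) (t : btree) : btree :=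
  match t with
  | BLeaf => BLeaf
  | BNode v l r =>
      if BNode v l r == single m then BLeaf else BNode v (remove_leaf m l) (remove_leaf m r)
  end.

Fixpoint leaf_site (m : nat) (t : btree) : nat :=
  match t with
  | BLeaf => 0
  | BNode _ l r => if m \in labels r then leaf_site m r else size (tree_word r) + leaf_site m l
  end.

Lemma node_eq_single v l r m : v != m -> (BNode v l r == single m) = false.
Proof. by apply: contraNF => /eqP[-> _ _]. Qed.

Lemma remove_leaf_single m : remove_leaf m (single m) = BLeaf.
Proof. by rewrite /=; case: eqP. Qed.

Lemma remove_leaf_id m t : m \notin labels t -> remove_leaf m t = t.
Proof.
elim: t => //= v l IHl r IHr; rewrite in_cons mem_cat !negb_or => /and3P[mv ml mr].
by rewrite eq_sym in mv; rewrite node_eq_single // IHl // IHr.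
Qed.

Lemma mem_insert t j m : j < size (tree_word t) -> m \in labels (insert t j m).
Proof. by move=> jt; rewrite (perm_mem (labels_insert m jt)) mem_head. Qed.

Lemma remove_insert t j m : j < size (tree_word t) -> all (fun u => u < m) (labels t) ->
  remove_leaf m (insert t j m) = t /\ leaf_site m (insert t j m) = j.
Proof.
elim: t j => [|v l IHl r IHr] j // jt; move: IHl IHr.
case: (insertP m jt) => {l r j jt} [l r j jr _ IHr|_ _|r _ _ _|l r j _ jl IHl _];
  rewrite all_labels_node => /and3P[/ltn_eqF/negbT vm lm rm] /=;
  rewrite node_eq_single // ?eqxx ?(negbTE (notin_below rm)).
- by have [-> ->] := IHr j jr rm; rewrite (mem_insert m jr) remove_leaf_id ?notin_below.
- by rewrite mem_seq1 eqxx.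
- by rewrite remove_leaf_id ?notin_below // !addn0.
- by have [-> ->] := IHl j jl lm; rewrite remove_leaf_id ?notin_below.
Qed.

Lemma increasing_max_root v l r : increasing (BNode v l r) ->
  all (fun u => u <= v) (labels (BNode v l r)) -> BNode v l r = single v.
Proof.
move=> /andP[/andP[vlr _] _] /andP[_ lrv].
suff : labels l ++ labels r = [::] by case: l {vlr lrv} => [|? ? ?]; case: r.
case: (labels l ++ labels r) vlr lrv => // u s /andP[vu _] /andP[uv _].
by have := leq_trans vu uv; rewrite ltnn.
Qed.

Lemma andre_single_right v l m : increasing l -> all (fun u => u < m) (labels l) ->
  andre_cond (BNode v l (single m)) -> l = BLeaf.
Proof.
case: l => // u ll lr il /andP[um _] /andP[/andP[+ _] _].
by rewrite (tmin_increasing il) /= ltnNge (ltnW um).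
Qed.

Lemma andre_cond_right v l r : andre_cond (BNode v l r) -> l != BLeaf -> r != BLeaf.
Proof. by case: r; case: l. Qed.

Lemma insert_remove t m : increasing t -> andre_cond t -> uniq (labels t) ->
  m \in labels t -> all (fun u => u <= m) (labels t) -> t != single m ->
  leaf_site m t < size (tree_word (remove_leaf m t)) /\
  insert (remove_leaf m t) (leaf_site m t) m = t.
Proof.
elim: t => [|v l IHl r IHr] // ti ta tu mt tm tN; have [il ir] := increasing_node ti.
have [ul ur] := uniq_labels_sub tu; have disj := labels_node_disjoint tu.
move: (ta) tm => /andP[/andP[_ la] ra]; rewrite all_labels_node => /and3P[vm lm rm].
have {}vm : v != m.
  apply: contraNneq tN => vm_eq; subst v.
  by rewrite increasing_max_root // all_labels_node leqnn lm.
rewrite /= node_eq_single //; case: (boolP (m \in labels r)) => mr.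
- have ml : m \notin labels l by apply/negP => /disj; apply; rewrite in_cons mr orbT.
  rewrite remove_leaf_id //; have [rm1|rN] := eqVneq r (single m).
    rewrite rm1 in ta *; rewrite (andre_single_right il (all_ltn_notin lm ml) ta).
    by rewrite remove_leaf_single insert_single.
  have [jr E] := IHr ir ra ur mr rm rN.
  by rewrite size_tree_word insert_right // E -addnA ltn_addr.
have ml : m \in labels l.
  by move: mt; rewrite /= in_cons mem_cat (negbTE mr) orbF eq_sym (negbTE vm).
rewrite (remove_leaf_id mr); have [lm1|lN] := eqVneq l (single m).
  rewrite lm1 in ta *; rewrite remove_leaf_single addn0 size_tree_word insert_unary.
    by split=> //; rewrite -addnA -[X in X < _]addn0 ltn_add2l.
  exact: andre_cond_right ta isT.
have [jl E] := IHl il la ul ml lm lN.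
rewrite size_tree_word insert_binary ?(tree_word_neq0 jl) // E (negbTE (tree_word_neq0 jl)).
by rewrite addn0 ltn_add2l.
Qed.

Lemma tree_word_bound t : all (fun a => a.2 < size (labels t)) (tree_word t).
Proof.
elim: t => [|v l IHl r IHr] //; have [->|lN] := eqVneq l BLeaf.
  rewrite tree_word_unary all_cat /= ltnSn !andbT.
  by apply: sub_all IHr => a /= /ltnW.
rewrite tree_word_binary // all_cat /shift all_map /= size_cat; apply/andP; split.
  by apply: sub_all IHr => a /= ar; lia.
by apply: sub_all IHl => a /= al; lia.
Qed.

Lemma tree_word_pairwise t : pairwise (fun a b => a.2 < b.2) (tree_word t).
Proof.
elim: t => [|v l IHl r IHr] //; have rb := tree_word_bound r.
have [->|lN] := eqVneq l BLeaf.
  rewrite tree_word_unary pairwise_cat IHr /= andbT allrel1r.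
  by apply: sub_all rb.
rewrite tree_word_binary // pairwise_cat IHr /shift pairwise_map; apply/andP; split.
  apply/allrelP => a b /(allP rb) ar /mapP[c _ ->] /=; lia.
by apply: sub_pairwise IHl => a b /=; rewrite ltn_add2r.
Qed.

Lemma aio_tree_word t : aio (tree_word t) = tree_word t.
Proof.
apply/sorted_sort/pairwise_sorted; first by move=> a b c; apply: leq_trans.
apply: sub_pairwise (tree_word_pairwise t) => -[a i] [b k] /= ik.
rewrite /aio_key /=; case: a; case: b; lia.
Qed.

(** * Enumeration of the André II trees *)

Definition insert_everywhere (m : nat) (s : seq btree) : seq btree :=
  [seq insert t j m | t <- s, j <- iota 0 (size (tree_word t))].

Fixpoint andreII_trees (n : nat) : seq btree :=
  if n is n'.+1 then insert_everywhere n.+1 (andreII_trees n') else [:: single 1].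

Lemma iota1S n : perm_eq (iota 1 n.+1) (n.+1 :: iota 1 n).
Proof. by rewrite -{1}[n.+1]addn1 iotaD perm_catC add1n; exact: perm_refl. Qed.

Lemma labels_below n t : perm_eq (labels t) (iota 1 n) -> all (fun u => u < n.+1) (labels t).
Proof. by move=> tn; apply/allP => u; rewrite (perm_mem tn) mem_iota; lia. Qed.

Lemma andreII_insert n t j : andreII n.+1 t -> j < size (tree_word t) ->
  andreII n.+2 (insert t j n.+2).
Proof.
move=> /andP[/andP[it tn] ta] jt; have tm := labels_below tn.
rewrite /andreII /increasing_on increasing_insert // it andre_cond_insert // ta andbT.
apply: perm_trans (labels_insert _ jt) _.
by rewrite perm_sym (permPl (iota1S _)) perm_cons perm_sym.
Qed.

Lemma andreII_remove n t (m := n.+2) (t' := remove_leaf m t) (j := leaf_site m t) :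
  andreII m t -> [/\ andreII n.+1 t', j < size (tree_word t') & insert t' j m = t].
Proof.
move=> /andP[/andP[it tn] ta]; have ut : uniq (labels t) by rewrite (perm_uniq tn) iota_uniq.
have mt : m \in labels t by rewrite (perm_mem tn) mem_iota; lia.
have tm : all (fun u => u <= m) (labels t) by apply: sub_all (labels_below tn) => u.
have tN : t != single m by apply: contraTneq tn => ->; apply/negP => /perm_size; rewrite size_iota.
have [jt E] := insert_remove it ta ut mt tm tN.
have pt' : perm_eq (m :: labels t') (labels t) by rewrite perm_sym -[in labels t]E labels_insert.
have t'm : all (fun u => u < m) (labels t').
  apply: all_ltn_notin; last by move: ut; rewrite -(perm_uniq pt') => /andP[].
  by apply/allP => u ut'; apply: (allP tm); rewrite -(perm_mem pt') in_cons ut' orbT.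
have it' : increasing t' by rewrite -(increasing_insert jt t'm) E.
split=> //; rewrite /andreII /increasing_on it' -(andre_cond_insert jt t'm it') E ta andbT.
by rewrite -(perm_cons m) (permPl pt') (permPl tn) iota1S.
Qed.

Lemma enumerates_insert_everywhere n s : enumerates (andreII n.+1) s ->
  enumerates (andreII n.+2) (insert_everywhere n.+2 s).
Proof.
move=> [us sA]; split.
  apply: allpairs_uniq_dep => // [t _|[t j] [t' j']]; first exact: iota_uniq.
  move=> /allpairsPdep[u [i [+ + [-> ->]]]] /allpairsPdep[u' [i' [+ + [-> ->]]]] /= E.
  rewrite !sA !mem_iota => /andP[/andP[_ /labels_below ub] _] /andP[_ iu].
  move=> /andP[/andP[_ /labels_below ub'] _] /andP[_ iu'].
  have [Eu Ei] := remove_insert iu ub; have [Eu' Ei'] := remove_insert iu' ub'.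
  by move: Eu Ei; rewrite E Eu' Ei' => -> ->.
move=> t; apply/allpairsPdep/idP => [[u [j [us' + ->]]]|ta].
  by rewrite mem_iota => /andP[_ ju]; apply: andreII_insert; rewrite -?sA.
have [t'A jt E] := andreII_remove ta.
by exists (remove_leaf n.+2 t), (leaf_site n.+2 t); rewrite sA mem_iota.
Qed.

Lemma andreII_trees_enum n : enumerates (andreII n.+1) (andreII_trees n).
Proof.
elim: n => [|n IH]; last exact: enumerates_insert_everywhere.
split=> // t; rewrite mem_seq1; apply/eqP/idP => [->|] //.
case: t => // v l r /andP[/andP[_ pt] _]; have := perm_mem pt v.
rewrite /= in_cons eqxx mem_seq1 => /esym/eqP ->; move/perm_size: pt; rewrite /= size_cat.
by case: l => [|? ? ?]; case: r.
Qed.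

(** * The q-derivative and the evaluation *)

Import GRing.Theory.
Local Open Scope ring_scope.

HB.instance Definition _ (R : nzRingType) (T : choiceType) (M : lmodType R) (f : T -> M) :=
  GRing.isZmodMorphism.Build {freeg T / R} M (fglift f) (lift_is_additive f).

Section Algebra.
Variable K : comNzRingType.
Local Notation EK := (E K).

Lemma scale_freegU (c k : {poly K}) w : c *: (<< k *g w >> : EK) = << c * k *g w >>.
Proof. by apply/eqP/freeg_eqP => x; rewrite coeffZ !coeffU mulrA. Qed.

Lemma rule_AndIIE a : rule_AndII K a = << 'X^(rule_deg a) *g rule_word a >>.
Proof. by case: a => [[]]. Qed.

Lemma qderiv_word_AndII w : qderiv_word (rule_AndII K) aio w =
  \sum_(0 <= j < size w) << 'X^(rule_deg (nth (false, 0) w j)) *g aio (derive_at w j) >>.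
Proof.
rewrite big_mkord; apply: eq_bigr => j _; rewrite rule_AndIIE.
by rewrite /mulW liftU scale_freegU mulr1 /rho_lin liftU scale_freegU mulr1.
Qed.

Definition tree_term (t : btree) : EK := << 'X^(Defs.inv t) *g tree_word t >>.

Lemma D_AndII_tree_term t m : uniq (labels t) -> all (fun u => (u < m)%N) (labels t) ->
  D_AndII (tree_term t) = \sum_(j <- iota 0 (size (tree_word t))) tree_term (insert t j m).
Proof.
move=> ut tm; rewrite /D_AndII /qderiv /tree_term liftU qderiv_word_AndII scaler_sumr.
rewrite /index_iota subn0; apply: eq_big_seq => j.
rewrite mem_iota => /andP[_ jt]; rewrite scale_freegU -exprD.
by rewrite inv_insert // -(tree_word_insert m jt) aio_tree_word.
Qed.

Lemma iter_D_AndII n :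
  iter n (@D_AndII K) << [:: (false, 0%N)] >> = \sum_(t <- andreII_trees n) tree_term t.
Proof.
elim: n => [|n IH]; first by rewrite big_seq1 /tree_term /Defs.inv !big_seq1 /is_inv ltnn.
rewrite iterS IH /D_AndII /qderiv raddf_sum big_allpairs_dep /=; apply: eq_big_seq => t.
have [_ ->] := andreII_trees_enum n; case/andP=> /andP[_ tn] _.
by apply: D_AndII_tree_term; [rewrite (perm_uniq tn) iota_uniq | exact: labels_below].
Qed.

Lemma embqE (c : {poly K}) : embq c = (map_poly (@mpolyC 3 K) c).[qvar K].
Proof.
rewrite horner_coef size_map_inj_poly ?raddf0 //; last exact: (can_inj (@mpolyCK 3 K)).
by apply: eq_bigr => i _; rewrite coef_map mul_mpolyC.
Qed.

Lemma embq0 : embq (0 : {poly K}) = 0.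
Proof. by rewrite embqE rmorph0 horner0. Qed.

Lemma embqD (c d : {poly K}) : embq (c + d) = embq c + embq d.
Proof. by rewrite !embqE rmorphD hornerD. Qed.

Lemma embqXn k : embq ('X^k : {poly K}) = qvar K ^+ k.
Proof. by rewrite embqE map_polyXn hornerXn. Qed.

Lemma phiE (F : EK) s : uniq s -> {subset dom F <= s} ->
  phi F = \sum_(w <- s) embq (coeff w F) * phi_word K w.
Proof.
move=> us sub; rewrite /phi [RHS](bigID (mem (dom F))) /= [X in _ = _ + X]big1 ?addr0.
  rewrite -[RHS]big_filter; apply: perm_big; apply: uniq_perm => [||w].
  - exact: uniq_dom.
  - exact: filter_uniq.
  by rewrite mem_filter andb_idr //; apply: sub.
by move=> w /coeff_outdom ->; rewrite embq0 mul0r.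
Qed.

Lemma phiD (F1 F2 : EK) : phi (F1 + F2) = phi F1 + phi F2.
Proof.
set s := undup (dom F1 ++ dom F2 ++ dom (F1 + F2)); have us : uniq s := undup_uniq _.
have s1 : {subset dom F1 <= s} by move=> w; rewrite mem_undup !mem_cat => ->.
have s2 : {subset dom F2 <= s} by move=> w; rewrite mem_undup !mem_cat => ->; rewrite orbT.
have s12 : {subset dom (F1 + F2) <= s} by move=> w; rewrite mem_undup !mem_cat => ->; rewrite !orbT.
rewrite (phiE us s12) (phiE us s1) (phiE us s2) -big_split.
by apply: eq_bigr => w _; rewrite coeffD embqD mulrDl.
Qed.

Lemma phi0 : phi (0 : EK) = 0.
Proof. by rewrite /phi dom0 big_nil. Qed.

Lemma phi_word_cat w1 w2 : phi_word K (w1 ++ w2) = phi_word K w1 * phi_word K w2.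
Proof. exact: big_cat. Qed.

Lemma phi_word_shift k w : phi_word K (shift k w) = phi_word K w.
Proof. exact: big_map. Qed.

Lemma phi_word_tree_word t : andre_cond t ->
  phi_word K (tree_word t) = xvar K ^+ nleaves t * yvar K ^+ nunary t.
Proof.
elim: t => [|v l IHl r IHr]; first by rewrite /phi_word big_nil mulr1.
move=> ta; have /andP[/andP[_ /IHl {}IHl] /IHr {}IHr] := ta.
have [-> {IHl}|lN] := eqVneq l BLeaf.
  rewrite tree_word_unary phi_word_cat IHr /phi_word big_seq1 /phi_letter /=.
  by case: r {ta IHr} => [|w rl rr] /=; rewrite !add0n ?exprS; ring.
rewrite tree_word_binary // phi_word_cat phi_word_shift IHl IHr /=.
by rewrite (negbTE lN) (negbTE (andre_cond_right ta lN)) /= !add0n !exprD; ring.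
Qed.

Lemma phi_tree_term t : andre_cond t -> phi (tree_term t) = weightII K t.
Proof.
move=> ta; rewrite (@phiE _ [:: tree_word t]) // ?big_seq1.
  by rewrite coeffU eqxx mulr1 embqXn phi_word_tree_word // /weightII mulrC.
by rewrite domU ?monic_neq0 ?monicXn.
Qed.

End Algebra.

Unset Implicit Arguments.

Theorem theorem6p12 (K : comNzRingType)
    (charK0 : forall k : nat, (k%:R : K) = 0 -> k = 0%N) (n : nat) :
  (exists s, enumerates (andreII n.+1) s) /\
  forall s, enumerates (andreII n.+1) s ->
    phi (iter n (@D_AndII K) (<< [:: (false, 0%N)] >> : E K))
    = \sum_(T <- s) weightII K T.
Proof.
have [uA A] := andreII_trees_enum n.
split=> [|s [us sA]]; first by exists (andreII_trees n).
have sP : perm_eq (andreII_trees n) s by apply: uniq_perm => // t; rewrite A sA.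
rewrite iter_D_AndII (big_morph _ (@phiD K) (@phi0 K)) (perm_big _ sP) /=.
by apply: eq_big_seq => t; rewrite sA => /andP[_]; apply: phi_tree_term.
Qed.
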